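(* Let $P$ be a positive causal logic program and let $P'$ be its unlabelled version (every rule label replaced by $1$, i.e. the corresponding standard positive logic program). Let $I$ be the least causal model of $P$ and $I'$ the least classical model of $P'$ (viewed as a map from atoms to $\{0,1\}$). Then $I'=I^{cl}$.
   Context: Causal values are down-sets of causal graphs (reflexively–transitively closed directed graphs on labels, ordered by reverse inclusion), with $0=\emptyset$ and $1$ the set of all causal graphs; $*$ is intersection, $+$ union, and $U\cdot U'={\downarrow}\{G\cdot G'\mid G\in U,G'\in U'\}$ where $G\cdot G'$ is the closure of the graph with vertices $V\cup V'$ and edges $E\cup E'\cup(V\times V')$; a label $l$ denotes ${\downarrow}$ of the graph with only edge $(l,l)$. Rules are $t:H\leftarrow B_1,\dots,B_n$ with $t$ a label or $1$; a causal interpretation $I$ (atoms to causal values) is a model of positive $P$ iff $(I(B_1)*\dots*I(B_n))\cdot t\subseteq I(H)$ for each rule; the least model is taken w.r.t. pointwise inclusion. For a causal interpretation $I$, $I^{cl}(p)=0$ if $I(p)=0$ and $I^{cl}(p)=1$ otherwise. *)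

From Stdlib Require Import List Relations Classical ClassicalEpsilon.
Import ListNotations.
Set Implicit Arguments.

Section Causal.
Variables (Lb At : Type).

Record cgraph := CGraph {
  cv : Lb -> Prop;
  ce : Lb -> Lb -> Prop;
  ce_dom : forall x y, ce x y -> cv x /\ cv y;
  ce_refl : forall x, cv x -> ce x x;
  ce_trans : forall x y z, ce x y -> ce y z -> ce x z
}.

Definition subgraph (G G' : cgraph) : Prop :=
  (forall x, cv G x -> cv G' x) /\ (forall x y, ce G x y -> ce G' x y).

Definition gle (G G' : cgraph) : Prop := subgraph G' G.

Definition gset := cgraph -> Prop.
Definition is_downset (U : gset) : Prop :=
  forall G H, U G -> gle H G -> U H.
Definition downclose (S : gset) : gset := fun H => exists G, S G /\ gle H G.

Definition cv0 : gset := fun _ => False.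
Definition cv1 : gset := fun _ => True.
Definition cvmul (U U' : gset) : gset := fun G => U G /\ U' G.
Definition cvadd (U U' : gset) : gset := fun G => U G \/ U' G.
Definition gsubset (U U' : gset) : Prop := forall G, U G -> U' G.

Definition gprod_base (G G' : cgraph) (x y : Lb) : Prop :=
  ce G x y \/ ce G' x y \/ (cv G x /\ cv G' y).

Definition gprod_v (G G' : cgraph) (x : Lb) : Prop := cv G x \/ cv G' x.

Lemma gprod_base_dom G G' x y :
  gprod_base G G' x y -> gprod_v G G' x /\ gprod_v G G' y.
Proof.
  unfold gprod_base, gprod_v; intros [H|[H|[H1 H2]]].
  - destruct (ce_dom _ _ _ H); tauto.
  - destruct (ce_dom _ _ _ H); tauto.
  - tauto.
Qed.

Lemma gprod_dom G G' x y :
  clos_trans _ (gprod_base G G') x y -> gprod_v G G' x /\ gprod_v G G' y.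
Proof.
  induction 1 as [x y H|x y z _ [H1 _] _ [_ H2]].
  - now apply gprod_base_dom.
  - tauto.
Qed.

Lemma gprod_refl G G' x : gprod_v G G' x -> clos_trans _ (gprod_base G G') x x.
Proof.
  intros [H|H]; apply t_step; unfold gprod_base.
  - left; now apply ce_refl.
  - right; left; now apply ce_refl.
Qed.

Lemma gprod_trans G G' x y z :
  clos_trans _ (gprod_base G G') x y -> clos_trans _ (gprod_base G G') y z ->
  clos_trans _ (gprod_base G G') x z.
Proof. intros; eapply t_trans; eauto. Qed.

Definition gprod (G G' : cgraph) : cgraph :=
  @CGraph (gprod_v G G') (clos_trans _ (gprod_base G G'))
    (@gprod_dom G G') (@gprod_refl G G') (@gprod_trans G G').

Definition cvapp (U U' : gset) : gset :=
  downclose (fun H => exists G G', U G /\ U' G' /\ H = gprod G G').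

Definition lgraph_v (l : Lb) (x : Lb) : Prop := x = l.
Definition lgraph_e (l : Lb) (x y : Lb) : Prop := x = l /\ y = l.
Lemma lgraph_dom l x y : lgraph_e l x y -> lgraph_v l x /\ lgraph_v l y.
Proof. unfold lgraph_e, lgraph_v; tauto. Qed.
Lemma lgraph_refl l x : lgraph_v l x -> lgraph_e l x x.
Proof. unfold lgraph_e, lgraph_v; tauto. Qed.
Lemma lgraph_trans l x y z : lgraph_e l x y -> lgraph_e l y z -> lgraph_e l x z.
Proof. unfold lgraph_e; tauto. Qed.
Definition lgraph (l : Lb) : cgraph :=
  @CGraph (lgraph_v l) (lgraph_e l) (@lgraph_dom l) (@lgraph_refl l) (@lgraph_trans l).

Definition cvlabel (l : Lb) : gset := downclose (fun G => G = lgraph l).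

(** Rules  t : H <- B_1,...,B_n  with t a label (Some l) or 1 (None). *)
Record rule := Rule { rlab : option Lb; rhead : At; rbody : list At }.

Definition program := rule -> Prop.

Definition lab_value (t : option Lb) : gset :=
  match t with Some l => cvlabel l | None => cv1 end.

Definition cinterp := At -> gset.
Definition is_cinterp (I : cinterp) : Prop := forall a, is_downset (I a).

Definition body_value (I : cinterp) (B : list At) : gset :=
  fold_right cvmul cv1 (map I B).

Definition causal_model (P : program) (I : cinterp) : Prop :=
  is_cinterp I /\
  forall r, P r ->
    gsubset (cvapp (body_value I (rbody r)) (lab_value (rlab r))) (I (rhead r)).

Definition least_causal_model (P : program) (I : cinterp) : Prop :=
  causal_model P I /\
  forall J, causal_model P J -> forall a, gsubset (I a) (J a).

Definition unlabel (r : rule) : rule := Rule None (rhead r) (rbody r).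
Definition unlabelled (P : program) : program :=
  fun r => exists r0, P r0 /\ r = unlabel r0.

Definition classical_model (P : program) (M : At -> bool) : Prop :=
  forall r, P r -> (forall b, In b (rbody r) -> M b = true) -> M (rhead r) = true.

Definition least_classical_model (P : program) (M : At -> bool) : Prop :=
  classical_model P M /\
  forall M', classical_model P M' -> forall a, M a = true -> M' a = true.

Definition cl_interp (I : cinterp) (a : At) : bool :=
  if excluded_middle_informative (exists G, I a G) then true else false.

End Causal.

(* A causal model collapses to a classical one: a graph witnessing an atom can be
   replaced by the complete graph on all labels, which lies below every causal graph,
   so non-emptiness of causal values propagates through the rules exactly as truth does
   in the unlabelled program; conversely, the classical least model, read as "every
   graph or no graph", is a causal model of the labelled program. *)
From Stdlib Require Import List Bool ClassicalEpsilon FunctionalExtensionality.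

Section Causal.
Context {Lb At : Type}.

Definition full_graph : cgraph Lb :=
  @CGraph Lb (fun _ => True) (fun _ _ => True)
    (fun _ _ _ => conj I I) (fun _ _ => I) (fun _ _ _ _ _ => I).

Lemma gle_full_graph (G : cgraph Lb) : gle full_graph G.
Proof. split; simpl; auto. Qed.

Lemma downset_full_graph (U : gset Lb) :
  is_downset U -> (exists G, U G) -> U full_graph.
Proof. intros HU [G HG]; exact (HU G full_graph HG (gle_full_graph G)). Qed.

Lemma lab_value_full_graph (t : option Lb) : lab_value t full_graph.
Proof.
  destruct t as [l|]; simpl; [|exact I].
  exists (lgraph l); split; [reflexivity | apply gle_full_graph].
Qed.

Lemma cvapp_gprod (U U' : gset Lb) (G G' : cgraph Lb) :
  U G -> U' G' -> cvapp U U' (gprod G G').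
Proof.
  intros HG HG'; exists (gprod G G'); split.
  - exists G, G'; auto.
  - split; auto.
Qed.

Lemma body_valueP (J : cinterp Lb At) (B : list At) (G : cgraph Lb) :
  body_value J B G <-> (forall b, In b B -> J b G).
Proof.
  induction B as [|b B IH]; simpl.
  - split; [intros _ b []|intros _; exact I].
  - unfold body_value in IH |- *; simpl; unfold cvmul; rewrite IH; split.
    + intros [Hb HB] c [<-|Hc]; auto.
    + intros H; split; auto.
Qed.

Lemma cl_interpP (J : cinterp Lb At) (a : At) :
  cl_interp J a = true <-> exists G, J a G.
Proof.
  unfold cl_interp; destruct excluded_middle_informative as [H|H].
  - tauto.
  - split; [discriminate | contradiction].
Qed.

Context {P : program Lb At}.

Lemma classical_model_cl_interp {J : cinterp Lb At} :
  causal_model P J -> classical_model (unlabelled P) (cl_interp J).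
Proof.
  intros [HdJ HJ] r [r0 [Hr0 ->]] Hbody; simpl in *.
  apply cl_interpP; exists (gprod full_graph full_graph).
  apply (HJ r0 Hr0), cvapp_gprod; [|apply lab_value_full_graph].
  apply body_valueP; intros b Hb.
  apply downset_full_graph, cl_interpP, Hbody; auto.
Qed.

Lemma causal_model_classical {M : At -> bool} :
  classical_model (unlabelled P) M -> causal_model P (fun a _ => M a = true).
Proof.
  intros HM; split.
  - intros a G H HG _; exact HG.
  - intros r Hr G [_ [[G1 [G2 [HB _]]] _]].
    apply (HM (unlabel r)); [exists r; auto|].
    exact (proj1 (body_valueP _ _ _) HB).
Qed.

End Causal.

Theorem theorem5 (Lb At : Type) (P : program Lb At)
  (I : cinterp Lb At) (I' : At -> bool) :
  least_causal_model P I ->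
  least_classical_model (unlabelled P) I' ->
  I' = cl_interp I.
Proof.
  intros [HI HminI] [HI' HminI'].
  assert (Hcl : forall a, I' a = true -> cl_interp I a = true)
    by exact (HminI' _ (classical_model_cl_interp HI)).
  assert (HI'cl : forall a, cl_interp I a = true -> I' a = true).
  { intros a [G HG]%cl_interpP.
    exact (HminI _ (causal_model_classical HI') a G HG). }
  apply functional_extensionality; intros a.
  apply eq_iff_eq_true; split; auto.
Qed.
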